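(* Let $L\subseteq\mathbb{C}^n$ be a linear subspace and $m\ge1$, and let $L(m)\subseteq(\mathbb{C}^n)^m=\mathbb{C}^{[m]\times[n]}$ be its $m$-thickening. Then the linear map \[ \gamma:(R_{L(m)})_1\to(R_L)_m,\qquad \gamma(z_S)=\prod_{i=1}^m z_{S_{i,*}}\quad(S\subseteq[m]\times[n]), \] is well defined and surjective.
   Context: The $m$-thickening $L(m)$ is the image of $L$ under the diagonal embedding $\mathbb{C}^n\hookrightarrow(\mathbb{C}^n)^m$; its coordinates are indexed by $[m]\times[n]$. For $S\subseteq[m]\times[n]$, $S_{i,*}=\{j:(i,j)\in S\}$. For a linear subspace $L'\subseteq\mathbb{C}^N$ with matroid $M'$ (bases: $\dim L'$-subsets $B$ with $L'\to\mathbb{C}^B$ an isomorphism), fix a matrix with row space $L'$ and columns $A_i$; for each circuit $C$ fix the dependence $\sum_{i\in C}\alpha_{C,i}A_i=0$; for $A'\subseteq[N]\setminus C$ let $f_C^{A'}(z)=\sum_{i\in C}\alpha_{C,i}z_{A'\cup\{i\}}$. Then $I_{L'}^{\mathrm{SE}}$ is the ideal of $\mathbb{C}[z_S:S\subseteq[N]]$ generated by all $z_Sz_T-z_{S\cup T}z_{S\cap T}$ and all $f_C^{A'}$, and $R_{L'}=\mathbb{C}[z_S:S\subseteq[N]]/I_{L'}^{\mathrm{SE}}$, graded by polynomial degree in the $z$'s; $(R_{L'})_k$ denotes its degree-$k$ part. *)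

From HB Require Import structures.
From mathcomp Require Import all_boot all_order all_algebra.
From mathcomp Require Import reals.
From mathcomp.real_closed Require Import complex.
From mathcomp.multinomials Require Import mpoly.

Set Implicit Arguments.
Unset Strict Implicit.
Unset Printing Implicit Defensive.

Import Order.TTheory GRing.Theory Num.Theory.
Local Open Scope ring_scope.

Section SE.
Variables (K : fieldType) (E : finType).

(* The polynomial ring K[z_S : S ⊆ E]; variables are indexed by {set E}
   through enum_rank. *)
Definition zring := {mpoly K[#|{set E}|]}.

Definition zvar (S : {set E}) : zring := 'X_(enum_rank S).

Definition in_ideal (G : zring -> Prop) (p : zring) : Prop :=
  exists s : seq (zring * zring),
    (forall x, x \in s -> G x.2) /\ p = \sum_(x <- s) x.1 * x.2.

Variable k : nat.
(* A linear subspace L' of K^E is given as the row space of a matrix with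
   rows  rows r : E -> K  (r < k);  its columns are A_e = (rows r e)_r. *)
Variable rows : 'I_k -> E -> K.

Definition col_dependence (alpha : E -> K) : Prop :=
  forall r : 'I_k, \sum_(e : E) alpha e * rows r e = 0.

Definition mdependent (S : {set E}) : Prop :=
  exists alpha : E -> K,
    (exists e, alpha e != 0) /\ (forall e, e \notin S -> alpha e = 0) /\
    col_dependence alpha.

Definition mcircuit (C : {set E}) : Prop :=
  mdependent C /\ forall C' : {set E}, C' \proper C -> ~ mdependent C'.

Definition fCA (C A' : {set E}) (alpha : E -> K) : zring :=
  \sum_(i in C) alpha i *: zvar (A' :|: [set i]).

Definition SE_gen (p : zring) : Prop :=
  (exists S T : {set E},
      p = zvar S * zvar T - zvar (S :|: T) * zvar (S :&: T))
  \/ (exists (C A' : {set E}) (alpha : E -> K),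
      [/\ mcircuit C, [disjoint A' & C],
          (forall e, e \notin C -> alpha e = 0), col_dependence alpha
        & p = fCA C A' alpha]).

Definition I_SE (p : zring) : Prop := in_ideal SE_gen p.

End SE.

(* The m-thickening: rows of L(m) are the images of the rows of L under the
   diagonal embedding K^n -> (K^n)^m = K^([m] x [n]). *)
Definition diag_emb (K : Type) (m n : nat) (x : 'I_n -> K) : 'I_m * 'I_n -> K :=
  fun ij => x ij.2.

Definition thicken (K : Type) (m n k : nat) (rows : 'I_k -> 'I_n -> K)
  : 'I_k -> 'I_m * 'I_n -> K :=
  fun r => @diag_emb K m n (rows r).

Definition slice (m n : nat) (S : {set 'I_m * 'I_n}) (i : 'I_m) : {set 'I_n} :=
  [set j | (i, j) \in S].

(* gamma on variables: z_S |-> prod_i z_{S_{i,*}}, extended linearly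
   (applied to homogeneous degree-1 polynomials, i.e. linear forms). *)
Definition gamma (K : fieldType) (m n : nat)
  (p : zring K ('I_m * 'I_n)%type) : zring K 'I_n :=
  mmap (@mpolyC _ K)
    (fun v => \prod_(i < m) zvar K (slice (enum_val v) i)) p.

(* On a multiple r * g of a generator of the ideal of L(m), the
   degree-one part is 0 when g is a binomial (of degree two), and a scalar
   multiple of g when g is a linear form f_C^A; so only gamma(f_C^A) matters.
   In R_L the binomial relations identify every product of variables with a
   "chain" product that depends only on how often each element occurs.  Hence
   gamma(z_{A + (i,j)}) = z_{F + j} * Q, where F is the set of columns full in
   A and Q does not depend on (i,j), and gamma(f_C^A) = Q * sum_j beta_j z_{F+j}
   with beta_j = sum_i alpha_{(i,j)} a linear dependence among the columns of
   L.  Such a form lies in the ideal of L, by induction on the support of beta,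
   subtracting multiples of circuit forms.  For surjectivity, the monomial
   z_{S_1} ... z_{S_m} is gamma(z_S) for the set S with rows S_1, ..., S_m. *)

From HB Require Import structures.
From mathcomp Require Import all_boot all_order all_algebra.
From mathcomp Require Import reals.
From mathcomp.real_closed Require Import complex.
From mathcomp.multinomials Require Import mpoly.
From Stdlib Require Import Classical.

Set Implicit Arguments.
Unset Strict Implicit.
Unset Printing Implicit Defensive.
Import Order.TTheory GRing.Theory Num.Theory.
Local Open Scope ring_scope.

Section InIdeal.
Variables (K : fieldType) (E : finType) (G : zring K E -> Prop).
Local Notation I := (in_ideal G).

Lemma in_ideal0 : I 0.
Proof. by exists [::]; rewrite big_nil. Qed.

Lemma in_idealD p q : I p -> I q -> I (p + q).
Proof.
case=> s [Gs ->] [t [Gt ->]]; exists (s ++ t); split; last by rewrite big_cat.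
by move=> x; rewrite mem_cat => /orP[/Gs|/Gt].
Qed.

Lemma in_idealMl r p : I p -> I (r * p).
Proof.
case=> s [Gs ->]; exists [seq (r * x.1, x.2) | x <- s]; split.
  by move=> x /mapP[y /Gs Gy ->].
by rewrite big_map mulr_sumr; apply: eq_bigr => x _; rewrite mulrA.
Qed.

Lemma in_ideal_gen g : G g -> I g.
Proof.
move=> Gg; exists [:: (1, g)]; rewrite big_seq1 mul1r; split => //.
by move=> x; rewrite inE => /eqP ->.
Qed.

Lemma in_idealN p : I p -> I (- p).
Proof. by rewrite -mulN1r; apply: in_idealMl. Qed.

Lemma in_idealZ c p : I p -> I (c *: p).
Proof. by rewrite -mul_mpolyC; apply: in_idealMl. Qed.

Lemma in_ideal_sum (T : Type) (r : seq T) (P : pred T) (F : T -> zring K E) :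
  (forall x, P x -> I (F x)) -> I (\sum_(x <- r | P x) F x).
Proof.
move=> IF; elim: r => [|x r IHr]; first by rewrite big_nil; apply: in_ideal0.
by rewrite big_cons; case: ifP => // Px; apply: in_idealD => //; apply: IF.
Qed.

Lemma in_ideal_trans a b c : I (a - b) -> I (b - c) -> I (a - c).
Proof. by move=> Iab Ibc; have := in_idealD Iab Ibc; rewrite addrA subrK. Qed.

End InIdeal.

Section Chains.
Variables (K : fieldType) (E : finType) (k : nat) (rows : 'I_k -> E -> K).
Local Notation I := (I_SE rows).
Local Notation z := (zvar K).

Definition zprod (s : seq {set E}) : zring K E := \prod_(X <- s) z X.

Definition mult (s : seq {set E}) (e : E) : nat :=
  count (fun X : {set E} => e \in X) s.

Definition chain (c : E -> nat) (m : nat) : seq {set E} :=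
  [seq [set e | (j < c e)%N] | j <- iota 0 m].

Lemma eq_chain c c' m : c =1 c' -> chain c m = chain c' m.
Proof.
by move=> eq_c; apply: eq_map => j; apply/setP => e; rewrite !inE eq_c.
Qed.

Lemma chainS c m :
  chain c m.+1 = [set e | (0 < c e)%N] :: chain (fun e => (c e).-1) m.
Proof.
rewrite /chain /= -add1n iotaDl -map_comp; congr (_ :: _); apply: eq_map => j.
by apply/setP => e; rewrite !inE /= ltn_predRL.
Qed.

Lemma mult_chain c m e : (c e <= m)%N -> mult (chain c m) e = c e.
Proof.
move=> le_cm; rewrite /mult count_map -size_filter.
rewrite (eq_filter (a2 := fun j => (j < 0 + c e)%N)) => [|j]; last by rewrite /= inE.
by rewrite filter_iota_ltn // size_iota.
Qed.

Lemma size_chain c m : size (chain c m) = m.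
Proof. by rewrite size_map size_iota. Qed.

Lemma mul_zvar_chain m c X : (forall e, c e <= m)%N ->
  I (z X * zprod (chain c m) - zprod (chain (fun e => c e + (e \in X))%N m.+1)).
Proof.
elim: m c X => [|m IHm] c X le_cm.
  have c0 e : c e = 0%N by apply/eqP; rewrite -leqn0.
  rewrite chainS /zprod !big_cons !big_nil.
  have -> : [set e | (0 < c e + (e \in X))%N] = X.
    by apply/setP => e; rewrite inE c0; case: (e \in X).
  by rewrite subrr; apply: in_ideal0.
set U := [set e | (0 < c e)%N].
rewrite chainS /zprod big_cons mulrA.
set P := zprod (chain (fun e => (c e).-1) m).
have binomial : I (z X * z U * P - z (X :|: U) * z (X :&: U) * P).
  by rewrite -mulrBl mulrC; apply/in_idealMl/in_ideal_gen; left; exists X, U.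
apply: in_ideal_trans (binomial) _; rewrite -mulrA chainS big_cons.
have -> : [set e | (0 < c e + (e \in X))%N] = X :|: U.
  by apply/setP => e; rewrite !inE; case: (e \in X); rewrite ?addn1 ?addn0.
rewrite (@eq_chain _ (fun e => (c e).-1 + (e \in X :&: U))%N); last first.
  move=> e; rewrite !inE; case: (e \in X) => /=; last by rewrite !addn0.
  by case: (c e) => [|x] //=; rewrite addn1.
rewrite -mulrBr; apply/in_idealMl/IHm => e.
by have := le_cm e; case: (c e).
Qed.

Lemma zprod_chain s : I (zprod s - zprod (chain (mult s) (size s))).
Proof.
elim: s => [|X s IHs]; first by rewrite /zprod !big_nil subrr; apply: in_ideal0.
rewrite /zprod big_cons.
have := in_idealMl (z X) IHs; rewrite mulrBr => /in_ideal_trans; apply.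
rewrite (@eq_chain (mult (X :: s)) (fun e => mult s e + (e \in X))%N).
  by apply: mul_zvar_chain => e; apply: count_size.
by move=> e; rewrite /mult /= addnC.
Qed.

Lemma zprod_congr s t :
  size s = size t -> mult s =1 mult t -> I (zprod s - zprod t).
Proof.
move=> eq_size eq_mult; apply: in_ideal_trans (zprod_chain s) _.
rewrite eq_size (eq_chain _ eq_mult) -opprB; apply/in_idealN/zprod_chain.
Qed.

End Chains.

Lemma proper_set_ind (T : finType) (P : {set T} -> Prop) :
  (forall S : {set T}, (forall S' : {set T}, S' \proper S -> P S') -> P S) ->
  forall S, P S.
Proof.
move=> IH S; have [N] := ubnP #|S|; elim: N S => // N IHN S ltSN.
by apply: IH => S' /proper_card ltS'S; apply: IHN; apply: leq_trans ltS'S _.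
Qed.

Section Dependences.
Variables (K : fieldType) (E : finType) (k : nat) (rows : 'I_k -> E -> K).
Local Notation I := (I_SE rows).
Local Notation z := (zvar K).

Lemma mdependent_circuit S :
  mdependent rows S -> exists2 C : {set E}, C \subset S & mcircuit rows C.
Proof.
elim/proper_set_ind: S => S IHS depS.
have [[C' [ltC'S depC']]|noC'] :=
  classic (exists C' : {set E}, C' \proper S /\ mdependent rows C').
  have [C subCC' circC] := IHS C' ltC'S depC'.
  by exists C => //; apply: subset_trans subCC' (proper_sub ltC'S).
by exists S => //; split => // C' ltC'S depC'; apply: noC'; exists C'.
Qed.

Lemma col_dependence_lincomb (a b : E -> K) (t : K) :
  col_dependence rows a -> col_dependence rows b ->
  col_dependence rows (fun e => b e - t * a e).
Proof.
move=> dep_a dep_b r; under eq_bigr do rewrite mulrBl -mulrA.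
by rewrite sumrB -mulr_sumr dep_a dep_b mulr0 subrr.
Qed.

Definition dep_form (A : {set E}) (b : E -> K) : zring K E :=
  \sum_e b e *: z (A :|: [set e]).

Lemma dep_form_lincomb (A : {set E}) (a b : E -> K) t :
  dep_form A b = dep_form A (fun e => b e - t * a e) + t *: dep_form A a.
Proof.
rewrite /dep_form scaler_sumr -big_split; apply: eq_bigr => e _ /=.
by rewrite scalerA -scalerDl subrK.
Qed.

Lemma fCA_dep_form (C A : {set E}) (a : E -> K) :
  (forall e, e \notin C -> a e = 0) -> fCA C A a = dep_form A a.
Proof.
move=> a_off; rewrite /dep_form (bigID (mem C)) /= [X in _ = _ + X]big1 ?addr0 //.
by move=> e /a_off ->; rewrite scale0r.
Qed.

Lemma dep_form_in_I_SE (A : {set E}) (b : E -> K) : col_dependence rows b ->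
  (forall e, b e != 0 -> e \notin A) -> I (dep_form A b).
Proof.
move: {2}[set e | b e != 0] (erefl [set e | b e != 0]) => S.
elim/proper_set_ind: S b => S IHsupp b suppS dep_b offA.
have [e1 b_e1|b0] := pickP (fun e => b e != 0); last first.
  rewrite /dep_form big1; first exact: in_ideal0.
  by move=> e _; move/negbT: (b0 e); rewrite negbK => /eqP ->; rewrite scale0r.
have [C subCS circC] :
    exists2 C : {set E}, C \subset [set e | b e != 0] & mcircuit rows C.
  apply: mdependent_circuit; exists b; split; first by exists e1.
  by split => // e; rewrite inE negbK => /eqP.
have [a [[e0 a_e0] [a_off dep_a]]] := circC.1.
have e0C : e0 \in C by apply: contraNT a_e0 => /a_off ->.
set t := b e0 / a e0; set b' := fun e => b e - t * a e.
have supp_b' e : b' e != 0 -> b e != 0.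
  apply: contraNN; rewrite /b' => /eqP b_e; rewrite b_e sub0r oppr_eq0.
  have [eC|/a_off->] := boolP (e \in C); last by rewrite mulr0.
  by move: (subsetP subCS _ eC); rewrite inE b_e eqxx.
rewrite (dep_form_lincomb A a b t) -(fCA_dep_form A a_off).
apply: in_idealD; last first.
  apply/in_idealZ/in_ideal_gen; right; exists C, A, a; split => //.
  rewrite disjoint_sym disjoint_subset; apply/subsetP => x xC; rewrite inE.
  by apply: offA; move: (subsetP subCS _ xC); rewrite inE.
apply: (IHsupp [set e | b' e != 0]) => //.
- rewrite -suppS; apply/properP; split.
    by apply/subsetP => e; rewrite !inE; apply: supp_b'.
  exists e0; first by move: (subsetP subCS _ e0C).
  by rewrite inE /b' /t divfK ?subrr ?eqxx.
- exact: col_dependence_lincomb.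
- by move=> e /supp_b' /offA.
Qed.

End Dependences.

Section Gamma.
Variables (K : fieldType) (m n : nat).
Local Notation zE := (zring K ('I_m * 'I_n)%type).

Lemma gammaZ c (p : zE) : gamma (c *: p) = c *: gamma p.
Proof. by rewrite /gamma mmapZ mul_mpolyC. Qed.

Lemma gammaM (p q : zE) : gamma (p * q) = gamma p * gamma q.
Proof. by rewrite /gamma rmorphM. Qed.

Lemma gamma_sum (T : Type) (r : seq T) (P : pred T) (F : T -> zE) :
  gamma (\sum_(x <- r | P x) F x) = \sum_(x <- r | P x) gamma (F x).
Proof. by rewrite /gamma raddf_sum. Qed.

Definition slices (S : {set 'I_m * 'I_n}) : seq {set 'I_n} :=
  [seq slice S i | i <- enum 'I_m].

Lemma gamma_zvar (S : {set 'I_m * 'I_n}) : gamma (zvar K S) = zprod K (slices S).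
Proof.
by rewrite /gamma /zvar mmapX mmap1U enum_rankK /zprod big_map big_enum.
Qed.

Lemma size_slices S : size (slices S) = m.
Proof. by rewrite size_map size_enum_ord. Qed.

Definition fiber_count (S : {set 'I_m * 'I_n}) (j : 'I_n) : nat :=
  count (fun i => (i, j) \in S) (enum 'I_m).

Lemma mult_slices S j : mult (slices S) j = fiber_count S j.
Proof. by rewrite /mult count_map; apply: eq_count => i; rewrite /= inE. Qed.

Lemma fiber_count_le S j : (fiber_count S j <= m)%N.
Proof. by rewrite -[m in (_ <= m)%N]size_enum_ord count_size. Qed.

Lemma fiber_count_full S j i : fiber_count S j = m -> (i, j) \in S.
Proof.
move=> full; have : all (fun i => (i, j) \in S) (enum 'I_m).
  by rewrite all_count size_enum_ord -[X in _ == X]full.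
by move/allP; apply; rewrite mem_enum.
Qed.

Lemma fiber_count_setU1 (S : {set 'I_m * 'I_n}) i0 j0 j : (i0, j0) \notin S ->
  fiber_count (S :|: [set (i0, j0)]) j = (fiber_count S j + (j == j0))%N.
Proof.
move=> notS; rewrite /fiber_count.
set inS := fun i => (i, j) \in S; set new := fun i => (i == i0) && (j == j0).
have disj : count (predI inS new) (enum 'I_m) = 0%N.
  rewrite (eq_count (a2 := pred0)) ?count_pred0 // => i /=; rewrite /inS /new.
  by case: eqP => [->|] //; case: eqP => [->|]; rewrite ?andbF // (negbTE notS).
rewrite (eq_count (a2 := predU inS new)) => [|i]; last by rewrite !inE xpair_eqE.
rewrite -[LHS]addn0 -disj count_predUI /new; congr (_ + _)%N.
case: (j == j0); last first.
  by rewrite (eq_count (a2 := pred0)) ?count_pred0 // => i; rewrite andbF.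
rewrite (eq_count (a2 := pred1 i0)); last by move=> i; rewrite andbT.
by rewrite count_uniq_mem ?enum_uniq // mem_enum.
Qed.

End Gamma.

Lemma pihomog_mulr_homog (R : ringType) (N d e : nat) (h g : {mpoly R[N]}) :
  g \is e.-homog -> pihomog mdeg d (h * g) =
    if (e <= d)%N then pihomog mdeg (d - e) h * g else 0.
Proof.
move=> homg.
rewrite {1}(@pihomog_partitionE _ _ mdeg (msize h + d.+1) h) ?leq_addr //.
rewrite mulr_suml raddf_sum /=.
have piM (i : nat) : pihomog mdeg d (pihomog mdeg i h * g) =
    if (i + e == d)%N then pihomog mdeg i h * g else 0.
  have homM : pihomog mdeg i h * g \is (i + e).-homog.
    by apply: dhomogM => //; apply: pihomogP.
  case: eqP => [i_e_d|/eqP ne]; first by rewrite pihomog_dE // -i_e_d.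
  exact: pihomog_ne0 homM.
rewrite (eq_bigr _ (fun (i : 'I_(msize h + d.+1)) _ => piM i)) -big_mkcond /=.
case: leqP => le_ed.
  have lt_de : (d - e < msize h + d.+1)%N by rewrite ltn_addl // ltnS leq_subr.
  rewrite (big_pred1 (Ordinal lt_de)) // => i /=.
  apply/eqP/eqP => [i_de|->]; last by rewrite /= subnK.
  by apply: val_inj; apply/eqP; rewrite /= -(eqn_add2r e) subnK // i_de.
rewrite big_pred0 // => i; apply/negbTE/eqP => i_de.
by move: le_ed; rewrite -i_de ltnNge leq_addl.
Qed.

Section Thickening.
Variables (K : fieldType) (m n k : nat) (rows : 'I_k -> 'I_n -> K).
Hypothesis m_gt0 : (0 < m)%N.
Local Notation I := (I_SE rows).
Local Notation z := (zvar K).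

Lemma col_dependence_thicken (al : 'I_m * 'I_n -> K) :
  col_dependence (thicken rows) al ->
  col_dependence rows (fun j => \sum_(i < m) al (i, j)).
Proof.
move=> dep_al r; rewrite -[RHS](dep_al r).
under eq_bigr do rewrite mulr_suml.
by rewrite exchange_big pair_big /=; apply: eq_bigr => -[i j].
Qed.

Variable A : {set 'I_m * 'I_n}.

Let full := [set j | fiber_count A j == m].
Let rest (j : 'I_n) := (fiber_count A j - (j \in full))%N.
Let Q := zprod K (chain rest m.-1).

Lemma gamma_zvar_setU1 i j : (i, j) \notin A ->
  I (gamma (z (A :|: [set (i, j)])) - z (full :|: [set j]) * Q).
Proof.
move=> notA; rewrite gamma_zvar.
have -> : z (full :|: [set j]) * Q =
    zprod K ((full :|: [set j]) :: chain rest m.-1) by rewrite /zprod big_cons.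
apply: zprod_congr => [|e]; first by rewrite size_slices /= size_chain prednK.
have not_full : fiber_count A j != m.
  by apply: contraNneq notA => /fiber_count_full; apply.
have le_m := fiber_count_le A e.
rewrite mult_slices fiber_count_setU1 //.
rewrite /mult /= -/(mult _ e) mult_chain /rest /full !inE; last first.
  case: eqP => [->|/eqP ne] /=; rewrite ?subn1 // subn0 -ltnS prednK //.
  by rewrite ltn_neqAle ne.
case: (eqVneq e j) => [->|_]; first by rewrite (negbTE not_full) /= subn0 addn1.
by case: eqP => [->|] /=; rewrite ?addn0 ?subn0 // add1n subn1 prednK.
Qed.

Lemma gamma_fCA (C : {set 'I_m * 'I_n}) (al : 'I_m * 'I_n -> K) :
  [disjoint A & C] -> (forall x, x \notin C -> al x = 0) ->
  col_dependence (thicken rows) al -> I (gamma (fCA C A al)).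
Proof.
move=> disAC al_off dep_al.
have notA x : x \in C -> x \notin A by move=> xC; rewrite (disjointFl disAC xC).
set be := fun j => \sum_(i < m) al (i, j).
have -> : gamma (fCA C A al) =
    (gamma (fCA C A al) - dep_form full be * Q) + dep_form full be * Q.
  by rewrite subrK.
apply: in_idealD; last first.
  rewrite mulrC; apply/in_idealMl/dep_form_in_I_SE.
    exact: col_dependence_thicken.
  move=> j; apply: contraNN; rewrite inE => /eqP /fiber_count_full full_j.
  rewrite /be big1 // => i _; apply: al_off.
  by apply: contraTN (full_j i); apply: notA.
have -> : dep_form full be * Q =
    \sum_(x in C) al x *: (z (full :|: [set x.2]) * Q).
  rewrite /dep_form mulr_suml; under eq_bigr do rewrite scaler_suml mulr_suml.
  rewrite exchange_big pair_big /= (bigID (mem C)) /= [X in _ + X]big1 ?addr0.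
    by apply: eq_bigr => -[i j] _; rewrite scalerAl.
  by move=> -[i j] /al_off ->; rewrite scale0r mul0r.
rewrite /fCA gamma_sum -sumrB; apply: in_ideal_sum => -[i j] xC.
by rewrite gammaZ -scalerBr; apply/in_idealZ/gamma_zvar_setU1/notA.
Qed.

End Thickening.

Lemma zvar_homog (K : fieldType) (E : finType) (S : {set E}) :
  zvar K S \is 1.-homog.
Proof. by rewrite dhomogX /= mdeg1. Qed.

Lemma fCA_homog (K : fieldType) (E : finType) (C A : {set E}) (al : E -> K) :
  fCA C A al \is 1.-homog.
Proof. by apply: rpred_sum => i _; apply/rpredZ/zvar_homog. Qed.

Lemma binomial_homog (K : fieldType) (E : finType) (S T : {set E}) :
  zvar K S * zvar K T - zvar K (S :|: T) * zvar K (S :&: T) \is 2.-homog.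
Proof. by apply: rpredB; apply: (@dhomogM _ _ _ 1 _ 1); apply: zvar_homog. Qed.

Lemma gamma_I_SE_homog1 (K : fieldType) (m n k : nat) (rows : 'I_k -> 'I_n -> K)
    (p : zring K ('I_m * 'I_n)%type) : (0 < m)%N ->
  p \is 1.-homog -> I_SE (thicken rows) p -> I_SE rows (gamma p).
Proof.
move=> m_gt0 homp [s [gen_s def_p]].
rewrite -(pihomog_dE homp) def_p raddf_sum gamma_sum /= big_seq.
apply: in_ideal_sum => x /gen_s [[S [T ->]]|[C [A [al [_ disAC al_off dep_al ->]]]]].
  rewrite (pihomog_mulr_homog _ _ (binomial_homog _ _ _)) /= /gamma raddf0.
  exact: in_ideal0.
rewrite (pihomog_mulr_homog _ _ (fCA_homog _ _ _)) /= gammaM; apply/in_idealMl.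
exact: gamma_fCA.
Qed.

Section Surjectivity.
Variables (K : fieldType) (m n : nat).
Local Notation N := #|{set 'I_n}|.

Definition monomial_sets (mo : 'X_{1..N}) : seq {set 'I_n} :=
  flatten [seq nseq (mo i) (enum_val i) | i <- enum 'I_N].

Lemma zprod_monomial_sets mo : zprod K (monomial_sets mo) = 'X_[mo].
Proof.
rewrite /zprod /monomial_sets big_flatten big_map big_enum /= mpolyXE_id.
apply: eq_bigr => i _; elim: (mo i) => [|j IHj]; first by rewrite big_nil expr0.
by rewrite big_cons IHj exprS /zvar enum_valK.
Qed.

Lemma size_monomial_sets mo : size (monomial_sets mo) = mdeg mo.
Proof.
rewrite /monomial_sets size_flatten /shape -map_comp sumnE big_map big_enum mdegE.
by apply: eq_bigr => i _; rewrite /= size_nseq.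
Qed.

Definition stack (s : seq {set 'I_n}) : {set 'I_m * 'I_n} :=
  [set x : 'I_m * 'I_n | x.2 \in nth set0 s x.1].

Lemma gamma_zvar_stack s : size s = m -> gamma (zvar K (stack s)) = zprod K s.
Proof.
move=> size_s; rewrite gamma_zvar /zprod /slices big_map big_enum /=.
rewrite [RHS](big_nth set0) size_s big_mkord.
by apply: eq_bigr => i _; congr zvar; apply/setP => j; rewrite !inE.
Qed.

Lemma gamma_surjective k (rows : 'I_k -> 'I_n -> K) (q : zring K 'I_n) :
  q \is m.-homog ->
  exists2 p : zring K ('I_m * 'I_n)%type,
    p \is 1.-homog & I_SE rows (gamma p - q).
Proof.
move=> homq.
exists (\sum_(mo <- msupp q) q@_mo *: zvar K (stack (monomial_sets mo))).
  by apply: rpred_sum => mo _; apply/rpredZ/zvar_homog.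
rewrite gamma_sum (eq_big_seq (fun mo => q@_mo *: 'X_[mo])); last first.
  move=> mo supp_mo; rewrite gammaZ gamma_zvar_stack ?zprod_monomial_sets //.
  by rewrite size_monomial_sets; apply: (dhomog_mf homq).
by rewrite -mpolyE subrr; apply: in_ideal0.
Qed.

End Surjectivity.

Theorem lemma5p17 (R : realType) (n k m : nat) (rows : 'I_k -> 'I_n -> R[i])
  (hm : (1 <= m)%N) :
  (forall p : zring R[i] ('I_m * 'I_n)%type,
      p \is 1.-homog ->
      I_SE (@thicken R[i] m n k rows) p ->
      I_SE rows (gamma p))
  /\
  (forall q : zring R[i] 'I_n,
      q \is m.-homog ->
      exists p : zring R[i] ('I_m * 'I_n)%type,
        p \is 1.-homog /\ I_SE rows (gamma p - q)).
Proof.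
split=> [p|q homq]; first exact: gamma_I_SE_homog1.
by have [p homp Ip] := gamma_surjective rows homq; exists p.
Qed.
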